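(* Let $\mathbb{F}$ be a field of characteristic $0$, $p,q>1$ integers with $p\neq q$, $\mathcal{J}_{\mathbb{F}}$ the Jordan triple system of all $p\times q$ matrices over $\mathbb{F}$ with triple product $\{x,y,z\}=xy^tz+zy^tx$, and $\mathcal{U}(\mathcal{J}_{\mathbb{F}})$ its universal associative envelope. Then $\mathcal{U}(\mathcal{J}_{\mathbb{F}})\cong M_{(p+q)\times(p+q)}(\mathbb{F})$, the associative algebra of all $(p+q)\times(p+q)$ matrices over $\mathbb{F}$.
   Context: Put $\Omega_1=\{1,\dots,p\}$, $\Omega_2=\{1,\dots,q\}$, and let $E_{i,j}$ ($i\in\Omega_1$, $j\in\Omega_2$) be the standard matrix units of $M_{p\times q}(\mathbb{F})$. Let $\mathfrak{F}$ be the free associative algebra (without identity element) over $\mathbb{F}$ on symbols $G_{i,j}$ ($i\in\Omega_1$, $j\in\Omega_2$), and let $\Phi:\mathcal{J}_{\mathbb{F}}\to\mathfrak{F}$ be the linear map with $\Phi(E_{i,j})=G_{i,j}$. Let $I$ be the two-sided ideal of $\mathfrak{F}$ generated by all elements $G_{i,j}G_{k,\ell}G_{s,t}+G_{s,t}G_{k,\ell}G_{i,j}-\Phi(\{E_{i,j},E_{k,\ell},E_{s,t}\})$ ($i,k,s\in\Omega_1$; $j,\ell,t\in\Omega_2$). The universal associative envelope is $\mathcal{U}(\mathcal{J}_{\mathbb{F}})=\mathfrak{F}/I$. *)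

From HB Require Import structures.
From mathcomp Require Import all_boot all_order all_algebra.
Set Implicit Arguments. Unset Strict Implicit. Unset Printing Implicit Defensive.
Import GRing.Theory.
Local Open Scope ring_scope.

(* Free associative algebra (without identity) over F on the symbols
   G_{i,j}, i : 'I_p, j : 'I_q.  An element is represented by its coefficient
   function on words (finite sequences of generator indices); elements of the
   free algebra are those functions with zero coefficient on the empty word
   (no identity) and finite support (= bounded degree, as there are finitely
   many words of each length). *)
Definition word (p q : nat) := seq ('I_p * 'I_q).
Definition fa (F : fieldType) (p q : nat) := word p q -> F.

Section FreeAlg.
Variables (F : fieldType) (p q : nat).
Implicit Types (f g : fa F p q).

Definition is_fa f : Prop :=
  f [::] = 0 /\ exists n : nat, forall w : word p q, (n <= size w)%N -> f w = 0.

Definition fa_zero : fa F p q := fun _ => 0.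
Definition fa_add f g : fa F p q := fun w => f w + g w.
Definition fa_scale (c : F) f : fa F p q := fun w => c * f w.
Definition fa_opp f : fa F p q := fa_scale (-1) f.
Definition fa_mul f g : fa F p q :=
  fun w => \sum_(i < (size w).+1) f (take i w) * g (drop i w).

Definition Phi (x : 'M[F]_(p, q)) : fa F p q :=
  fun w => match w with [:: a] => x a.1 a.2 | _ => 0 end.

Definition G (i : 'I_p) (j : 'I_q) : fa F p q := Phi (delta_mx i j).

Definition jtriple (x y z : 'M[F]_(p, q)) : 'M[F]_(p, q) :=
  x *m y^T *m z + z *m y^T *m x.

Definition rel_gen (i : 'I_p) (j : 'I_q) (k : 'I_p) (l : 'I_q)
  (s : 'I_p) (t : 'I_q) : fa F p q :=
  fa_add (fa_add (fa_mul (fa_mul (G i j) (G k l)) (G s t))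
                 (fa_mul (fa_mul (G s t) (G k l)) (G i j)))
         (fa_opp (Phi (jtriple (delta_mx i j) (delta_mx k l) (delta_mx s t)))).

Definition is_ideal (S : fa F p q -> Prop) : Prop :=
  [/\ forall f, S f -> is_fa f,
      S fa_zero,
      forall f g, S f -> S g -> S (fa_add f g),
      forall c f, S f -> S (fa_scale c f) &
      forall a f, is_fa a -> S f -> S (fa_mul a f) /\ S (fa_mul f a)].

Definition envI (f : fa F p q) : Prop :=
  forall S, is_ideal S -> (forall i j k l s t, S (rel_gen i j k l s t)) -> S f.

End FreeAlg.

From HB Require Import structures.
From mathcomp Require Import all_boot all_order all_algebra.
From Stdlib Require Import ClassicalEpsilon FunctionalExtensionality PropExtensionality.
Set Implicit Arguments. Unset Strict Implicit. Unset Printing Implicit Defensive.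
Import GRing.Theory.
Local Open Scope ring_scope.

(* The envelope is the free algebra on generators x_st = G_st modulo the
   relations x_ij x_kl x_st + x_st x_kl x_ij = {E_ij, E_kl, E_st}.  Sending x_st
   to [[0, E_st], [E_st^T, 0]] satisfies them in M_{p+q}, so it induces an
   algebra map Psi, onto because every matrix unit is the image of a word of
   length at most 4.  Conversely, in any ring where the relations hold and 2 is
   cancellable, products of generators built from two distinct rows and two
   distinct columns behave as the matrix units e_ab of M_{p+q}: e_ab x_st is
   computed as in M_{p+q}, and x_st = e_(s,p+t) + e_(p+t,s).  In the unital
   quotient of the free algebra by I this gives a linear map sigma on M_{p+q}
   with sigma (Psi w) = w for every word w, so the kernel of Psi is exactly I. *)

(* {E_ij, E_kl, E_st} = [j == l][k == s] E_it + [l == t][i == k] E_sj. *)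
Definition triple_rel (B : pzRingType) (p q : nat) (x : 'I_p -> 'I_q -> B) :=
  forall i j k l s t,
  x i j * x k l * x s t + x s t * x k l * x i j =
  (if (j == l) && (k == s) then x i t else 0) +
  (if (l == t) && (i == k) then x s j else 0).

Lemma triple_relT (B : pzRingType) (p q : nat) (x : 'I_p -> 'I_q -> B) :
  triple_rel x -> triple_rel (fun j i => x i j).
Proof. by move=> xR j i l k t s; rewrite xR addrC andbC [(j == l) && _]andbC. Qed.

Definition other (T : eqType) (a0 a1 a : T) := if a == a0 then a1 else a0.

Lemma otherP (T : eqType) (a0 a1 a : T) : a0 != a1 -> other a0 a1 a != a.
Proof. by rewrite /other; case: ifP => [/eqP->|]; rewrite eq_sym // => ->. Qed.

Section RowUnits.
Variables (B : pzRingType) (p q : nat) (x : 'I_p -> 'I_q -> B).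
Hypothesis xR : triple_rel x.
Hypothesis twice_inj : forall a b : B, a *+ 2 = b *+ 2 -> a = b.
Variables (i0 i1 : 'I_p) (j0 j1 : 'I_q).
Hypotheses (hi : i0 != i1) (hj : j0 != j1).

Local Notation oi := (other i0 i1).
Local Notation oj := (other j0 j1).

Lemma x_sandwich i j k l :
  x i j * x k l * x i j = if (i == k) && (j == l) then x i j else 0.
Proof.
apply: twice_inj; rewrite mulr2n xR (eq_sym k) (eq_sym l).
by case: (i == k); case: (j == l); rewrite /= ?mulr0n ?mulr2n ?addr0.
Qed.

Lemma x_sq_rel a b c d : x a b * x a b * x c d + x c d * x a b * x a b =
  (if a == c then x a d else 0) + (if b == d then x c b else 0).
Proof. by rewrite xR !eqxx andbT. Qed.

Lemma x_mul_disj i j k l : i != k -> j != l -> x i j * x k l = 0.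
Proof.
move=> ik jl.
have bab : x k l * x i j * x k l = 0 by rewrite x_sandwich eq_sym (negbTE ik).
have bbb : x k l * x k l * x k l = x k l by rewrite x_sandwich !eqxx.
have anti : x i j * x k l * x k l = - (x k l * x k l * x i j).
  apply/eqP; rewrite -addr_eq0 addrC x_sq_rel (eq_sym k) (negbTE ik).
  by rewrite (eq_sym l) (negbTE jl) addr0.
rewrite -{1}bbb !mulrA anti mulNr -!mulrA (mulrA (x k l) (x i j)) bab.
by rewrite mulr0 oppr0.
Qed.

Lemma x_mul_colE i k j l : i != k -> x i j * x k j = x i l * x k l.
Proof.
move=> ik; have [->//|jl] := eqVneq j l.
have il0 : x i j * x k l = 0 by rewrite x_mul_disj.
have e1 : x i j * x k j * x k l = x i l - x k l * x k j * x i j.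
  by apply/eqP; rewrite eq_sym subr_eq xR !eqxx (negbTE jl) /= addr0.
have e2 : x k l * x k l * x k j + x k j * x k l * x k l = x k j.
  by rewrite x_sq_rel eqxx eq_sym (negbTE jl) addr0.
rewrite -{1}e2 mulrDr !mulrA il0 !mul0r add0r -(mulrA _ (x k l)) mulrA e1.
by rewrite mulrBl -!mulrA il0 !mulr0 subr0.
Qed.

(* In M_{p+q}, [rowu i k] is E_ik for i != k and [proj i] is E_ii. *)
Definition rowu i k := x i j0 * x k j0.

Lemma rowu_trans a b c :
  a != b -> b != c -> a != c -> rowu a b * rowu b c = rowu a c.
Proof.
move=> ab bc ac; rewrite /rowu.
have e : x b j0 * x b j0 * x c j0 = x c j0 - x c j0 * x b j0 * x b j0.
  by apply/eqP; rewrite eq_sym subr_eq x_sq_rel (negbTE bc) eqxx add0r.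
have cb : x c j1 * x b j0 = 0 by rewrite x_mul_disj // eq_sym.
rewrite -!mulrA (mulrA (x b j0) (x b j0) (x c j0)) e mulrBr !mulrA.
by rewrite (x_mul_colE j0 j1 ac) -(mulrA _ (x c j1)) cb mulr0 mul0r subr0.
Qed.

Definition proj i := rowu i (oi i) * rowu (oi i) i.

Lemma rowu_cycle i k : k != i -> rowu i k * rowu k i = proj i.
Proof.
move=> ki; rewrite /proj; set m := oi i; have mi : m != i := otherP i hi.
have [<-//|km] := eqVneq k m.
by rewrite -(rowu_trans km mi ki) mulrA (rowu_trans _ km) // eq_sym.
Qed.

Lemma proj_col i k t : k != i -> x i t * x k t * x k t * x i t = proj i.
Proof.
move=> ki; rewrite -(rowu_cycle ki) /rowu -mulrA -(x_mul_colE t j0 ki).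
by rewrite -(x_mul_colE t j0 _) 1?eq_sym // !mulrA.
Qed.

Lemma proj_mul_x a c d : c != a -> proj a * x c d = 0.
Proof.
move=> ca; rewrite -(proj_col (oj d) (otherP a hi)) -mulrA.
by rewrite (@x_mul_disj a (oj d) c d) ?mulr0 // ?otherP // eq_sym.
Qed.

End RowUnits.

Section BlockUnits.
Variables (B : pzRingType) (p q : nat) (x : 'I_p -> 'I_q -> B).
Hypothesis xR : triple_rel x.
Hypothesis twice_inj : forall a b : B, a *+ 2 = b *+ 2 -> a = b.
Variables (i0 i1 : 'I_p) (j0 j1 : 'I_q).
Hypotheses (hi : i0 != i1) (hj : j0 != j1).

Local Notation xT := (fun j i => x i j).
Local Notation xTR := (triple_relT xR).
Local Notation projU := (proj x i0 i1 j0).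
(* The transposed generators satisfy the same relations, so the results on
   rows of [x] also hold for its columns. *)
Definition projL j := proj xT j0 j1 i0 j.

Lemma x_mul_rowE j l i k : j != l -> x i j * x i l = x k j * x k l.
Proof. exact: (x_mul_colE xTR twice_inj). Qed.

Lemma projL_row j l s : l != j -> x s j * x s l * x s l * x s j = projL j.
Proof. exact: (proj_col xTR twice_inj hj hi). Qed.

Lemma projU_mul_row i j l : j != l -> projU i * x i j * x i l = 0.
Proof.
move=> jl; rewrite -mulrA (x_mul_rowE _ (other i0 i1 i)) // mulrA.
by rewrite (proj_mul_x xR twice_inj hi hj) ?mul0r // otherP.
Qed.

Lemma projU_mul_projL i j : projU i * projL j = 0.
Proof.
rewrite -(projL_row (other i0 i1 i) (otherP j hj)) !mulrA.
by rewrite (proj_mul_x xR twice_inj hi hj) ?mul0r // otherP.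
Qed.

Lemma x_sq s l : x s l * x s l = projU s + projL l.
Proof.
set k := other i0 i1 s; set t := other j0 j1 l.
have ks : k != s := otherP s hi.
have tl : t != l := otherP l hj.
have e : x s t * x k t * x k l + x k l * x k t * x s t = x s l.
  by rewrite xR !eqxx (negbTE tl) /= addr0.
rewrite -{1}e mulrDl -(mulrA (x s t * x k t)) -(mulrA (x k l * x k t)).
rewrite (x_mul_colE xR twice_inj l t ks) (x_mul_rowE s k tl) !mulrA.
by rewrite (proj_col xR twice_inj hi hj _ ks) (projL_row _ tl).
Qed.

Definition unitUL i t := projU i * x i t.
Definition unitUU i k := unitUL i j0 * x k j0.

Lemma unitUL_mul_x i j s t :
  unitUL i j * x s t = if j == t then unitUU i s else 0.
Proof.
rewrite /unitUU /unitUL -!(mulrA (projU i)).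
have [<-|jt] := eqVneq j t.
  have [<-|si] := eqVneq s i; first by rewrite !x_sq !mulrDr !projU_mul_projL.
  by rewrite (x_mul_colE xR twice_inj j j0) // eq_sym.
have [<-|si] := eqVneq s i; first by rewrite mulrA projU_mul_row.
by rewrite (x_mul_disj xR twice_inj) ?mulr0 // eq_sym.
Qed.

Lemma unitUU_mul_x i k s t :
  unitUU i k * x s t = if k == s then unitUL i t else 0.
Proof.
rewrite /unitUU /unitUL.
have e : x i j0 * x k j0 * x s t = (if k == s then x i t else 0) +
   (if (j0 == t) && (i == k) then x s j0 else 0) - x s t * x k j0 * x i j0.
  by apply/eqP; rewrite eq_sym subr_eq xR eqxx.
rewrite -!(mulrA (projU i)) e mulrBr mulrDr !(fun_if (fun z => projU i * z)) !mulr0.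
have [si|si] := eqVneq s i; last first.
  rewrite (mulrA (projU i) (x s t * x k j0)) (mulrA (projU i) (x s t)).
  by rewrite !(proj_mul_x xR twice_inj hi hj _ si) if_same !mul0r addr0 subr0.
subst s; have [->|tj] := eqVneq t j0.
  rewrite (x_sandwich xR twice_inj) eqxx andbT (eq_sym k).
  by case: (i == k); rewrite ?mulr0 ?subr0 ?addr0 ?addrK.
have -> : projU i * (x i t * x k j0 * x i j0) = 0.
  have [->|ki] := eqVneq k i; first by rewrite !mulrA projU_mul_row ?mul0r // eq_sym.
  by rewrite (x_mul_disj xR twice_inj (k:=k)) ?mul0r ?mulr0 // eq_sym.
by rewrite subr0 /= addr0.
Qed.

End BlockUnits.

Lemma split_lshift m n (i : 'I_m) : split (lshift n i) = inl i.
Proof. exact: (unsplitK (inl i)). Qed.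

Lemma split_rshift m n (i : 'I_n) : split (rshift m i) = inr i.
Proof. exact: (unsplitK (inr i)). Qed.

Local Notation eq_shiftE := (eq_lshift, eq_rshift, eq_lrshift, eq_rlshift).

Section MatrixUnits.
Variables (B : pzRingType) (p q : nat) (x : 'I_p -> 'I_q -> B).
Hypothesis xR : triple_rel x.
Hypothesis twice_inj : forall a b : B, a *+ 2 = b *+ 2 -> a = b.
Variables (i0 i1 : 'I_p) (j0 j1 : 'I_q).
Hypotheses (hi : i0 != i1) (hj : j0 != j1).

Local Notation xTR := (triple_relT xR).

Definition unitLU t i := projL x i0 j0 j1 t * x i t.
Definition unitLL j l := unitLU j i0 * x i0 l.

Lemma unitLU_mul_x j i s t :
  unitLU j i * x s t = if i == s then unitLL j t else 0.
Proof. exact: (unitUL_mul_x xTR twice_inj hj hi). Qed.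

Lemma unitLL_mul_x j l s t :
  unitLL j l * x s t = if l == t then unitLU j s else 0.
Proof. exact: (unitUU_mul_x xTR twice_inj hj hi). Qed.

Lemma x_unitE s t : x s t = unitUL x i0 i1 j0 s t + unitLU t s.
Proof.
rewrite /unitUL /unitLU -mulrDl -(x_sq xR twice_inj hi hj).
by rewrite (x_sandwich xR twice_inj) !eqxx.
Qed.

Definition munit (a b : 'I_(p + q)) : B :=
  match split a, split b with
  | inl i, inl k => unitUU x i0 i1 j0 i k
  | inl i, inr t => unitUL x i0 i1 j0 i t
  | inr t, inl i => unitLU t i
  | inr t, inr l => unitLL t l
  end.

Lemma munit_mul_x a b s t : munit a b * x s t =
  (if b == lshift q s then munit a (rshift p t) else 0) +
  (if b == rshift p t then munit a (lshift q s) else 0).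
Proof.
rewrite /munit; case: (split_ordP b) => b' ->; case: (split_ordP a) => a' _;
  rewrite ?eq_shiftE ?split_lshift ?split_rshift.
- by rewrite (unitUU_mul_x xR twice_inj hi hj) addr0.
- by rewrite unitLU_mul_x addr0.
- by rewrite (unitUL_mul_x xR twice_inj hi hj) add0r.
- by rewrite unitLL_mul_x add0r.
Qed.

Lemma x_munitE s t :
  x s t = munit (lshift q s) (rshift p t) + munit (rshift p t) (lshift q s).
Proof. by rewrite /munit !split_lshift !split_rshift x_unitE. Qed.

End MatrixUnits.

Section MatrixModel.
Variables (R : pzRingType) (p q : nat).
Local Notation M := 'M[R]_(p + q).

Definition jmx (s : 'I_p) (t : 'I_q) : M :=
  delta_mx (lshift q s) (rshift p t) + delta_mx (rshift p t) (lshift q s).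

Lemma delta_mul_jmx m (a : 'I_m) b s t : delta_mx a b *m jmx s t =
  (if b == lshift q s then delta_mx a (rshift p t) else 0) +
  (if b == rshift p t then delta_mx a (lshift q s) else 0).
Proof. by rewrite mulmxDr !mul_delta_mx_cond !mulrb. Qed.

Lemma jmx_mul i j k l : jmx i j * jmx k l =
  (if j == l then delta_mx (lshift q i) (lshift q k) else 0) +
  (if i == k then delta_mx (rshift p j) (rshift p l) else 0).
Proof.
rewrite {1}/jmx -mulmxE mulmxDl !delta_mul_jmx.
by rewrite ?eq_shiftE ?add0r ?addr0.
Qed.

Lemma jmx_mul3 i j k l s t : jmx i j * jmx k l * jmx s t =
  (if (j == l) && (k == s) then delta_mx (lshift q i) (rshift p t) else 0) +
  (if (i == k) && (l == t) then delta_mx (rshift p j) (lshift q s) else 0).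
Proof.
rewrite jmx_mul -mulmxE mulmxDl.
case: (j == l); case: (i == k); rewrite ?mul0mx ?delta_mul_jmx
  ?eq_shiftE ?add0r ?addr0 //.
Qed.

Lemma triple_rel_jmx : triple_rel jmx.
Proof.
move=> i j k l s t; rewrite !jmx_mul3 (eq_sym t) (eq_sym k i) (eq_sym s) (eq_sym l j).
rewrite [(l == t) && _]andbC [(k == s) && _]andbC.
case: ((j == l) && (k == s)); case: ((i == k) && (l == t)); rewrite /jmx ?addr0 ?add0r //.
- by rewrite addrACA [delta_mx _ _ + delta_mx (lshift q s) _]addrC addrACA addrC.
- by rewrite addrC.
Qed.

Definition wmx (w : word p q) : M := \prod_(a <- w) jmx a.1 a.2.

Lemma wmx_cat u v : wmx (u ++ v) = wmx u *m wmx v.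
Proof. by rewrite /wmx big_cat. Qed.

Variables (i0 i1 : 'I_p) (j0 j1 : 'I_q).
Hypotheses (hi : i0 != i1) (hj : j0 != j1).
Local Notation oi := (other i0 i1).
Local Notation oj := (other j0 j1).

Definition unit_word (a b : 'I_(p + q)) : word p q :=
  match split a, split b with
  | inl i, inl k => [:: (i, j0); (oi i, j0); (oi i, j0); (k, j0)]
  | inl i, inr t => [:: (i, j0); (oi i, j0); (oi i, t)]
  | inr j, inl i => [:: (i0, j); (i0, oj j); (i, oj j)]
  | inr j, inr l => [:: (i0, j); (i0, oj j); (i0, oj j); (i0, l)]
  end.

Lemma unit_word_neq0 a b : unit_word a b != [::].
Proof. by rewrite /unit_word; case: (split a); case: (split b). Qed.

Lemma wmx_unit_word a b : wmx (unit_word a b) = delta_mx a b.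
Proof.
have ni i : (i == oi i) = false by rewrite eq_sym (negbTE (otherP i hi)).
have nj j : (j == oj j) = false by rewrite eq_sym (negbTE (otherP j hj)).
rewrite /unit_word /wmx; case: (split_ordP a) => i ->; case: (split_ordP b) => k ->;
  rewrite ?split_lshift ?split_rshift !big_cons big_nil mulr1 /= !mulrA jmx_mul
    ?ni ?nj eqxx ?addr0 ?add0r -!mulmxE;
  by do ?rewrite delta_mul_jmx ?eq_shiftE ?eqxx ?add0r ?addr0.
Qed.

End MatrixModel.

Section Combinations.
Variables (F : fieldType) (p q : nat).
Local Notation fa := (fa F p q).
Local Notation word := (word p q).
Local Notation comb := (seq (F * word)).
Implicit Types (f g h : fa) (l : comb) (u v w : word).

(* Elements of the free algebra with identity are represented by finite
   formal combinations of words; [coef] computes the coefficient function. *)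
Definition coef l : fa := fun w => \sum_(a <- l) a.1 * (w == a.2)%:R.
Definition cscale (c : F) l : comb := [seq (c * a.1, a.2) | a <- l].
Definition cmul l1 l2 : comb := [seq (a.1 * b.1, a.2 ++ b.2) | a <- l1, b <- l2].
Definition coef_word w : fa := coef [:: (1, w)].

Lemma coef_wordE u w : coef_word u w = (w == u)%:R.
Proof. by rewrite /coef_word /coef big_seq1 mul1r. Qed.

Lemma coef_nil : coef [::] = @fa_zero F p q.
Proof. by apply: functional_extensionality => w; rewrite /coef big_nil. Qed.

Lemma coef_cons a l : coef (a :: l) = fa_add (fa_scale a.1 (coef_word a.2)) (coef l).
Proof.
apply: functional_extensionality => w.
by rewrite /fa_add /fa_scale coef_wordE /coef big_cons.
Qed.

Lemma coef_cat l1 l2 : coef (l1 ++ l2) = fa_add (coef l1) (coef l2).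
Proof. by apply: functional_extensionality => w; rewrite /coef /fa_add big_cat. Qed.

Lemma coef_scale c l : coef (cscale c l) = fa_scale c (coef l).
Proof.
apply: functional_extensionality => w; rewrite /coef /fa_scale big_map mulr_sumr.
by apply: eq_bigr => a _; rewrite mulrA.
Qed.

Lemma sum_take_drop_eq w u v :
  \sum_(i < (size w).+1) (take i w == u)%:R * (drop i w == v)%:R = (w == u ++ v)%:R :> F.
Proof.
have [->|ne] := eqVneq w (u ++ v).
  have hu : (size u < (size (u ++ v)).+1)%N by rewrite size_cat ltnS leq_addr.
  rewrite (bigD1 (Ordinal hu)) //= take_size_cat // drop_size_cat // !eqxx mulr1.
  rewrite big1 ?addr0 // => i /eqP ne; case: eqP => [e|]; last by rewrite mul0r.
  case: ne; apply: val_inj => /=; rewrite -(congr1 size e) size_takel //.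
  by rewrite -ltnS.
rewrite big1 // => i _; case: eqP => [e1|]; last by rewrite mul0r.
case: eqP => [e2|]; last by rewrite mulr0.
by case/eqP: ne; rewrite -e1 -e2 cat_take_drop.
Qed.

Lemma coef_mul l1 l2 : fa_mul (coef l1) (coef l2) = coef (cmul l1 l2).
Proof.
apply: functional_extensionality => w; rewrite /fa_mul /coef big_allpairs_dep /=.
transitivity (\sum_(i < (size w).+1) \sum_(a <- l1) \sum_(b <- l2)
   (a.1 * b.1) * ((take i w == a.2)%:R * (drop i w == b.2)%:R)).
  apply: eq_bigr => i _; rewrite mulr_suml; apply: eq_bigr => a _.
  by rewrite mulr_sumr; apply: eq_bigr => b _; rewrite mulrACA.
rewrite exchange_big; apply: eq_bigr => a _.
by rewrite exchange_big; apply: eq_bigr => b _; rewrite -mulr_sumr sum_take_drop_eq.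
Qed.

Lemma fa_mulDr f g h : fa_mul f (fa_add g h) = fa_add (fa_mul f g) (fa_mul f h).
Proof.
apply: functional_extensionality => w; rewrite /fa_mul /fa_add -big_split.
by apply: eq_bigr => i _; rewrite mulrDr.
Qed.

Lemma fa_mulDl f g h : fa_mul (fa_add g h) f = fa_add (fa_mul g f) (fa_mul h f).
Proof.
apply: functional_extensionality => w; rewrite /fa_mul /fa_add -big_split.
by apply: eq_bigr => i _; rewrite mulrDl.
Qed.

Lemma fa_mulZr f c g : fa_mul f (fa_scale c g) = fa_scale c (fa_mul f g).
Proof.
apply: functional_extensionality => w; rewrite /fa_mul /fa_scale mulr_sumr.
by apply: eq_bigr => i _; rewrite mulrCA.
Qed.

Lemma fa_mulZl f c g : fa_mul (fa_scale c g) f = fa_scale c (fa_mul g f).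
Proof.
apply: functional_extensionality => w; rewrite /fa_mul /fa_scale mulr_sumr.
by apply: eq_bigr => i _; rewrite mulrA.
Qed.

Lemma fa_mul0r f : fa_mul (@fa_zero F p q) f = @fa_zero F p q.
Proof.
by apply: functional_extensionality => w; rewrite /fa_mul big1 // => i _; rewrite mul0r.
Qed.

Lemma fa_mulr0 f : fa_mul f (@fa_zero F p q) = @fa_zero F p q.
Proof.
by apply: functional_extensionality => w; rewrite /fa_mul big1 // => i _; rewrite mulr0.
Qed.

Lemma fa_mul1r f : fa_mul (coef_word [::]) f = f.
Proof.
apply: functional_extensionality => w.
rewrite /fa_mul big_ord_recl /= take0 drop0 coef_wordE eqxx mul1r big1 ?addr0 // => i _.
rewrite coef_wordE; case: eqP; rewrite ?mul0r // => /(congr1 size).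
by rewrite /= size_takel // ltn_ord.
Qed.

Lemma fa_mulr1 f : fa_mul f (coef_word [::]) = f.
Proof.
apply: functional_extensionality => w.
rewrite /fa_mul big_ord_recr /= drop_size take_size coef_wordE eqxx mulr1.
rewrite big1 ?add0r // => i _; rewrite coef_wordE.
case: eqP; rewrite ?mulr0 // => /(congr1 size) /eqP.
by rewrite size_drop /= subn_eq0 leqNgt ltn_ord.
Qed.

End Combinations.

Section EnvelopeIdeal.
Variables (F : fieldType) (p q : nat).
Local Notation fa := (fa F p q).
Local Notation comb := (seq (F * word p q)).
Implicit Types (f g a : fa).

Lemma is_fa_zero : is_fa (@fa_zero F p q).
Proof. by split => //; exists 0%N. Qed.

Lemma is_fa_add f g : is_fa f -> is_fa g -> is_fa (fa_add f g).
Proof.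
case=> f0 [n fn] [g0 [m gm]]; split; first by rewrite /fa_add f0 g0 addr0.
exists (maxn n m) => w; rewrite geq_max => /andP[hn hm].
by rewrite /fa_add fn // gm // addr0.
Qed.

Lemma is_fa_scale c f : is_fa f -> is_fa (fa_scale c f).
Proof.
case=> f0 [n fn]; split; first by rewrite /fa_scale f0 mulr0.
by exists n => w h; rewrite /fa_scale fn // mulr0.
Qed.

Lemma is_fa_mul f g : is_fa f -> is_fa g -> is_fa (fa_mul f g).
Proof.
case=> f0 [n fn] [g0 [m gm]]; split.
  by rewrite /fa_mul big_ord_recl big_ord0 /= f0 mul0r addr0.
exists (n + m)%N => w h; rewrite /fa_mul big1 // => i _.
have iw : (i <= size w)%N by rewrite -ltnS ltn_ord.
case: (leqP n i) => ni; first by rewrite fn ?mul0r // size_takel.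
rewrite gm ?mulr0 // size_drop leq_subRL //.
by apply: leq_trans h; rewrite leq_add2r ltnW.
Qed.

Lemma is_fa_Phi (x : 'M[F]_(p, q)) : is_fa (Phi x).
Proof. by split=> //; exists 2%N => [[|a [|b w]]]. Qed.

Lemma is_fa_rel_gen i j k l s t : is_fa (@rel_gen F p q i j k l s t).
Proof.
by apply: is_fa_add; [apply: is_fa_add|apply: is_fa_scale; apply: is_fa_Phi];
  repeat apply: is_fa_mul; apply: is_fa_Phi.
Qed.

Lemma is_fa_word (u : word p q) : u != [::] -> is_fa (coef_word F u).
Proof.
move=> nu; split; first by rewrite coef_wordE eq_sym (negbTE nu).
by exists (size u).+1 => w h; rewrite coef_wordE; case: eqP h => // ->; rewrite ltnn.
Qed.

Lemma envI_zero : envI (@fa_zero F p q).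
Proof. by move=> S []. Qed.

Lemma envI_add f g : envI f -> envI g -> envI (fa_add f g).
Proof.
move=> If Ig S IS Srel; case: (IS) => _ _ SD _ _.
by apply: SD; [exact: If|exact: Ig].
Qed.

Lemma envI_scale c f : envI f -> envI (fa_scale c f).
Proof. by move=> If S IS Srel; case: (IS) => _ _ _ SZ _; apply: SZ; exact: If. Qed.

Lemma envI_mull a f : is_fa a -> envI f -> envI (fa_mul a f).
Proof.
by move=> ha If S IS Srel; case: (IS) => _ _ _ _ SM; case: (SM a f ha (If S IS Srel)).
Qed.

Lemma envI_mulr a f : is_fa a -> envI f -> envI (fa_mul f a).
Proof.
by move=> ha If S IS Srel; case: (IS) => _ _ _ _ SM; case: (SM a f ha (If S IS Srel)).
Qed.

Lemma envI_rel_gen i j k l s t : envI (@rel_gen F p q i j k l s t).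
Proof. by move=> S _; apply. Qed.

(* [I] is also an ideal of the free algebra with identity. *)
Lemma envI_mulr_coef f (l : comb) : envI f -> envI (fa_mul f (coef l)).
Proof.
move=> If; elim: l => [|a l IH]; first by rewrite coef_nil fa_mulr0; exact: envI_zero.
rewrite coef_cons fa_mulDr fa_mulZr; apply: envI_add => //; apply: envI_scale.
have [->|nu] := eqVneq a.2 [::]; first by rewrite fa_mulr1.
by apply: envI_mulr => //; apply: is_fa_word.
Qed.

Lemma envI_mull_coef f (l : comb) : envI f -> envI (fa_mul (coef l) f).
Proof.
move=> If; elim: l => [|a l IH]; first by rewrite coef_nil fa_mul0r; exact: envI_zero.
rewrite coef_cons fa_mulDl fa_mulZl; apply: envI_add => //; apply: envI_scale.
have [->|nu] := eqVneq a.2 [::]; first by rewrite fa_mul1r.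
by apply: envI_mull => //; apply: is_fa_word.
Qed.

End EnvelopeIdeal.

Section Quotient.
Variables (F : fieldType) (p q : nat).
Local Notation comb := (seq (F * word p q)).
Implicit Types (l : comb).

Definition congI l1 l2 : Prop := envI (fa_add (coef l1) (fa_opp (coef l2))).

Lemma congI_coef l1 l2 : coef l1 = coef l2 -> congI l1 l2.
Proof.
move=> e; rewrite /congI e.
have -> : fa_add (coef l2) (fa_opp (coef l2)) = @fa_zero F p q.
  by apply: functional_extensionality => w; rewrite /fa_add /fa_opp /fa_scale mulN1r subrr.
exact: envI_zero.
Qed.

Lemma congI_refl l : congI l l.
Proof. exact: congI_coef. Qed.

Lemma congI_sym l1 l2 : congI l1 l2 -> congI l2 l1.
Proof.
move=> h; have := envI_scale (-1) h; congr envI.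
apply: functional_extensionality => w; rewrite /fa_add /fa_opp /fa_scale.
by rewrite !mulN1r opprD opprK addrC.
Qed.

Lemma congI_trans l1 l2 l3 : congI l1 l2 -> congI l2 l3 -> congI l1 l3.
Proof.
move=> h1 h2; have := envI_add h1 h2; congr envI.
apply: functional_extensionality => w; rewrite /fa_add /fa_opp /fa_scale.
by rewrite !mulN1r addrA subrK.
Qed.

Lemma congI_cat a a' b b' : congI a a' -> congI b b' -> congI (a ++ b) (a' ++ b').
Proof.
move=> h1 h2; have := envI_add h1 h2; congr envI; rewrite !coef_cat.
apply: functional_extensionality => w; rewrite /fa_add /fa_opp /fa_scale.
by rewrite !mulN1r opprD addrACA.
Qed.

Lemma congI_scale c a a' : congI a a' -> congI (cscale c a) (cscale c a').
Proof.
move=> h; have := envI_scale c h; congr envI; rewrite !coef_scale.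
apply: functional_extensionality => w; rewrite /fa_add /fa_opp /fa_scale.
by rewrite !mulN1r mulrDr mulrN.
Qed.

Lemma congI_mul a a' b b' : congI a a' -> congI b b' -> congI (cmul a b) (cmul a' b').
Proof.
move=> h1 h2.
have := envI_add (envI_mulr_coef b h1) (envI_mull_coef a' h2); congr envI.
rewrite -!coef_mul fa_mulDl fa_mulDr /fa_opp fa_mulZl fa_mulZr.
apply: functional_extensionality => w; rewrite /fa_add /fa_scale.
by rewrite !mulN1r addrA subrK.
Qed.

Definition canon l : comb := epsilon (inhabits [::]) (congI l).

Lemma congI_canon l : congI l (canon l).
Proof.
exact: (epsilon_spec (inhabits [::]) (congI l) (ex_intro _ l (congI_refl l))).
Qed.

Lemma canon_eq l1 l2 : congI l1 l2 -> canon l1 = canon l2.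
Proof.
move=> h; rewrite /canon; congr epsilon.
apply: functional_extensionality => l; apply: propositional_extensionality.
by split => h'; [exact: congI_trans (congI_sym h) h'|exact: congI_trans h h'].
Qed.

Lemma canon_idem l : canon (canon l) == canon l.
Proof. by apply/eqP; apply: canon_eq; apply: congI_sym; apply: congI_canon. Qed.

(* The quotient of the free algebra with identity by [I]. *)
Definition env := {l : comb | canon l == l}.
HB.instance Definition _ := Choice.on env.

Definition pi l : env := exist _ (canon l) (canon_idem l).

Lemma piK (a : env) : pi (val a) = a.
Proof. by apply: val_inj => /=; apply/eqP; case: a. Qed.

Lemma pi_eq l1 l2 : congI l1 l2 -> pi l1 = pi l2.
Proof. by move=> h; apply: val_inj => /=; apply: canon_eq. Qed.

Lemma pi_inj l1 l2 : pi l1 = pi l2 -> congI l1 l2.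
Proof.
move/(congr1 val) => /= e.
by apply: congI_trans (congI_canon l1) _; rewrite e; apply: congI_sym; apply: congI_canon.
Qed.

Lemma congI_val_pi l : congI (val (pi l)) l.
Proof. exact: congI_sym (congI_canon l). Qed.

Let addq := locked (fun a b : env => pi (val a ++ val b)).
Let oppq := locked (fun a : env => pi (cscale (-1) (val a))).

Let addq_pi l1 l2 : addq (pi l1) (pi l2) = pi (l1 ++ l2).
Proof. by rewrite /addq -lock; apply: pi_eq; apply: congI_cat; apply: congI_val_pi. Qed.

Let oppq_pi l : oppq (pi l) = pi (cscale (-1) l).
Proof. by rewrite /oppq -lock; apply: pi_eq; apply: congI_scale; apply: congI_val_pi. Qed.

Let addqA : associative addq.
Proof. by move=> a b c; rewrite -[a]piK -[b]piK -[c]piK !addq_pi catA. Qed.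

Let addqC : commutative addq.
Proof.
move=> a b; rewrite -[a]piK -[b]piK !addq_pi; apply: pi_eq; apply: congI_coef.
by rewrite !coef_cat; apply: functional_extensionality => w; rewrite /fa_add addrC.
Qed.

Let add0q : left_id (pi [::]) addq.
Proof. by move=> a; rewrite -[a]piK addq_pi. Qed.

Let addNq : left_inverse (pi [::]) oppq addq.
Proof.
move=> a; rewrite -[a]piK oppq_pi addq_pi; apply: pi_eq; apply: congI_coef.
rewrite coef_cat coef_scale coef_nil; apply: functional_extensionality => w.
by rewrite /fa_add /fa_scale /fa_zero mulN1r addNr.
Qed.

HB.instance Definition _ := GRing.isZmodule.Build env addqA addqC add0q addNq.

Lemma piD l1 l2 : pi l1 + pi l2 = pi (l1 ++ l2).
Proof. exact: addq_pi. Qed.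

Lemma pi_nil : pi [::] = 0.
Proof. by []. Qed.

Let mulq := locked (fun a b : env => pi (cmul (val a) (val b))).

Let mulq_pi l1 l2 : mulq (pi l1) (pi l2) = pi (cmul l1 l2).
Proof. by rewrite /mulq -lock; apply: pi_eq; apply: congI_mul; apply: congI_val_pi. Qed.

Let mulqA : associative mulq.
Proof.
move=> a b c; rewrite -[a]piK -[b]piK -[c]piK !mulq_pi; apply: pi_eq; apply: congI_coef.
apply: functional_extensionality => w; rewrite /coef !big_allpairs_dep /=.
apply: eq_bigr => x _; rewrite big_allpairs_dep /=; apply: eq_bigr => y _.
by apply: eq_bigr => z _; rewrite mulrA catA.
Qed.

Let mul1q : left_id (pi [:: (1, [::])]) mulq.
Proof.
move=> a; rewrite -[a]piK mulq_pi; apply: pi_eq; apply: congI_coef.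
apply: functional_extensionality => w; rewrite /coef !big_allpairs_dep /= big_seq1 /=.
by apply: eq_bigr => x _; rewrite mul1r.
Qed.

Let mulq1 : right_id (pi [:: (1, [::])]) mulq.
Proof.
move=> a; rewrite -[a]piK mulq_pi; apply: pi_eq; apply: congI_coef.
apply: functional_extensionality => w; rewrite /coef !big_allpairs_dep /=.
by apply: eq_bigr => x _; rewrite big_seq1 /= mulr1 cats0.
Qed.

Let mulqDl : left_distributive mulq addq.
Proof.
move=> a b c; rewrite -[a]piK -[b]piK -[c]piK !addq_pi !mulq_pi addq_pi.
by rewrite /cmul allpairs_cat.
Qed.

Let mulqDr : right_distributive mulq addq.
Proof.
move=> a b c; rewrite -[a]piK -[b]piK -[c]piK !addq_pi !mulq_pi addq_pi.
apply: pi_eq; apply: congI_coef; apply: functional_extensionality => w.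
rewrite /coef big_cat !big_allpairs_dep.
by under eq_bigr do rewrite big_cat; rewrite big_split.
Qed.

HB.instance Definition _ :=
  GRing.Zmodule_isPzRing.Build env mulqA mul1q mulq1 mulqDl mulqDr.

Lemma piM l1 l2 : pi l1 * pi l2 = pi (cmul l1 l2).
Proof. exact: mulq_pi. Qed.

Let scaleq := locked (fun (c : F) (a : env) => pi (cscale c (val a))).

Let scaleq_pi c l : scaleq c (pi l) = pi (cscale c l).
Proof. by rewrite /scaleq -lock; apply: pi_eq; apply: congI_scale; apply: congI_val_pi. Qed.

Let scaleqA c d a : scaleq c (scaleq d a) = scaleq (c * d) a.
Proof.
rewrite -[a]piK !scaleq_pi /cscale -map_comp.
by congr pi; apply: eq_map => x /=; rewrite mulrA.
Qed.

Let scale1q : left_id 1 scaleq.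
Proof.
move=> a; rewrite -[a]piK scaleq_pi /cscale map_id_in // => -[c w] _ /=.
by rewrite mul1r.
Qed.

Let scaleqDr : right_distributive scaleq addq.
Proof.
by move=> c a b; rewrite -[a]piK -[b]piK addq_pi !scaleq_pi addq_pi /cscale map_cat.
Qed.

Let scaleqDl a : {morph scaleq^~ a : c d / c + d >-> addq c d}.
Proof.
move=> c d; rewrite -[a]piK !scaleq_pi addq_pi; apply: pi_eq; apply: congI_coef.
rewrite coef_cat !coef_scale.
by apply: functional_extensionality => w; rewrite /fa_scale /fa_add mulrDl.
Qed.

HB.instance Definition _ :=
  GRing.Zmodule_isLmodule.Build F env scaleqA scale1q scaleqDr scaleqDl.

Lemma piZ c l : c *: pi l = pi (cscale c l).
Proof. exact: scaleq_pi. Qed.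

Lemma env_scalerAl (c : F) (a b : env) : c *: (a * b) = (c *: a) * b.
Proof.
rewrite -[a]piK -[b]piK piZ !piM piZ; apply: pi_eq; apply: congI_coef.
by rewrite -coef_mul !coef_scale -coef_mul fa_mulZl.
Qed.

End Quotient.

Section Words.
Variables (p q : nat).
Local Notation word := (word p q).

Fixpoint words_of_size (k : nat) : seq word :=
  if k is k'.+1 then [seq a :: w | a <- enum [set: 'I_p * 'I_q], w <- words_of_size k']
  else [:: [::]].

Fixpoint words (n : nat) : seq word :=
  if n is n'.+1 then words n' ++ words_of_size n' else [::].

Lemma mem_words_of_size k w : (w \in words_of_size k) = (size w == k).
Proof.
elim: k w => [|k IH] [|a w]; rewrite /= ?in_cons ?orbF //.
  by apply/negP => /allpairsP [[b v] [_ _ //]].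
rewrite eqSS -IH; apply/allpairsP/idP => [[[b v] /= [_ hv [_ ->]]] //|hw].
by exists (a, w); rewrite mem_enum in_setT.
Qed.

Lemma uniq_words_of_size k : uniq (words_of_size k).
Proof.
elim: k => [|k IH] //=; apply: allpairs_uniq => //; first exact: enum_uniq.
by move=> [a w] [b v] _ _ /= [-> ->].
Qed.

Lemma mem_words n w : (w \in words n) = (size w < n)%N.
Proof.
elim: n => [|n IH]; first by rewrite in_nil ltn0.
by rewrite /= mem_cat IH mem_words_of_size ltnS orbC -leq_eqVlt.
Qed.

Lemma uniq_words n : uniq (words n).
Proof.
elim: n => [|n IH] //=; rewrite cat_uniq IH uniq_words_of_size andbT /=.
by apply/hasPn => w; rewrite mem_words_of_size mem_words => /eqP ->; rewrite ltnn.
Qed.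

End Words.

Section Psi.
Variables (F : fieldType) (p q : nat).
Local Notation fa := (fa F p q).
Local Notation word := (word p q).
Local Notation comb := (seq (F * word)).
Local Notation M := 'M[F]_(p + q).
Implicit Types (f g : fa) (l : comb).

Definition bounded f n := forall w : word, (n <= size w)%N -> f w = 0.
Definition bound f := epsilon (inhabits 0%N) (bounded f).
Definition Psi_upto f n : M := \sum_(w <- words p q n) f w *: wmx F w.
(* The linear extension of [w |-> wmx w]; junk on functions of unbounded
   support, for which [bound] is arbitrary. *)
Definition Psi f : M := Psi_upto f (bound f).

Lemma bounded_le f n m : bounded f n -> (n <= m)%N -> bounded f m.
Proof. by move=> h nm w hw; apply: h; apply: leq_trans hw. Qed.

Lemma Psi_upto_le f n m : bounded f n -> (n <= m)%N -> Psi_upto f m = Psi_upto f n.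
Proof.
move=> hb; elim: m => [|m IH]; first by rewrite leqn0 => /eqP ->.
rewrite leq_eqVlt => /orP[/eqP -> //|]; rewrite ltnS => nm.
rewrite {1}/Psi_upto /= big_cat -/(Psi_upto f m) IH //.
rewrite [X in _ + X = _]big_seq big1 ?addr0 // => w.
by rewrite mem_words_of_size => /eqP sw; rewrite hb ?scale0r // sw.
Qed.

Lemma PsiE f n : bounded f n -> Psi f = Psi_upto f n.
Proof.
move=> hb; have hb' : bounded f (bound f).
  exact: (epsilon_spec (inhabits 0%N) (bounded f) (ex_intro _ n hb)).
by rewrite /Psi -(Psi_upto_le hb' (leq_maxl _ n)) (Psi_upto_le hb (leq_maxr _ n)).
Qed.

Definition comb_bound l := \max_(a <- l) (size a.2).+1.

Lemma size_lt_comb_bound l a : a \in l -> (size a.2 < comb_bound l)%N.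
Proof. by move=> al; rewrite /comb_bound (leq_bigmax_seq a). Qed.

Lemma bounded_coef l : bounded (coef l) (comb_bound l).
Proof.
move=> w hw; rewrite /coef big_seq big1 // => a al.
case: eqP => [e|]; last by rewrite mulr0.
by move: (size_lt_comb_bound al); rewrite -e ltnNge hw.
Qed.

Lemma Psi_coef l : Psi (coef l) = \sum_(a <- l) a.1 *: wmx F a.2.
Proof.
rewrite (PsiE (@bounded_coef l)) /Psi_upto /coef.
under eq_bigr do rewrite scaler_suml.
rewrite exchange_big big_seq [RHS]big_seq; apply: eq_bigr => a al.
rewrite (bigD1_seq a.2) ?mem_words ?uniq_words ?size_lt_comb_bound //= eqxx mulr1.
by rewrite big1 ?addr0 // => w /negbTE ->; rewrite mulr0 scale0r.
Qed.

Definition comb_of f n : comb := [seq (f w, w) | w <- words p q n].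

Lemma coef_comb_of f n : bounded f n -> coef (comb_of f n) = f.
Proof.
move=> hb; apply: functional_extensionality => w; rewrite /coef big_map /=.
have [hw|hw] := ltnP (size w) n; last first.
  rewrite hb // big_seq big1 // => u; rewrite mem_words => hu.
  by case: eqP => [e|]; [rewrite -e ltnNge hw in hu|rewrite mulr0].
rewrite (bigD1_seq w) ?mem_words ?uniq_words //= eqxx mulr1 big1 ?addr0 // => u.
by rewrite eq_sym => /negbTE ->; rewrite mulr0.
Qed.

Lemma is_fa_bounded f : is_fa f -> exists n, bounded f n.
Proof. by case=> _ [n hn]; exists n. Qed.

Lemma is_fa_bounded2 f g : is_fa f -> is_fa g -> exists n, bounded f n /\ bounded g n.
Proof.
move=> /is_fa_bounded [n hn] /is_fa_bounded [m hm]; exists (maxn n m).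
by split; [apply: bounded_le hn (leq_maxl _ _)|apply: bounded_le hm (leq_maxr _ _)].
Qed.

Lemma Psi_add f g : is_fa f -> is_fa g -> Psi (fa_add f g) = Psi f + Psi g.
Proof.
move=> hf hg; have [n [bf bg]] := is_fa_bounded2 hf hg.
by rewrite -(coef_comb_of bf) -(coef_comb_of bg) -coef_cat !Psi_coef big_cat.
Qed.

Lemma Psi_scale c f : is_fa f -> Psi (fa_scale c f) = c *: Psi f.
Proof.
move=> hf; have [n bf] := is_fa_bounded hf.
rewrite -(coef_comb_of bf) -coef_scale !Psi_coef /cscale big_map scaler_sumr.
by apply: eq_bigr => a _; rewrite scalerA.
Qed.

Lemma Psi_mul f g : is_fa f -> is_fa g -> Psi (fa_mul f g) = Psi f *m Psi g.
Proof.
move=> hf hg; have [n [bf bg]] := is_fa_bounded2 hf hg.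
rewrite -(coef_comb_of bf) -(coef_comb_of bg) coef_mul !Psi_coef /cmul.
rewrite big_allpairs_dep /= mulmx_suml; apply: eq_bigr => a _.
rewrite mulmx_sumr; apply: eq_bigr => b _.
by rewrite wmx_cat -scalemxAl -scalemxAr scalerA.
Qed.

End Psi.

Section PsiRelations.
Variables (F : fieldType) (p q : nat).
Local Notation fa := (fa F p q).

Lemma jtriple_delta i j k l s t :
  jtriple (delta_mx i j) (delta_mx k l) (delta_mx s t) =
  (if (j == l) && (k == s) then delta_mx i t else 0) +
  (if (l == t) && (i == k) then delta_mx s j else 0) :> 'M[F]_(p, q).
Proof.
rewrite /jtriple !trmx_delta !mul_delta_mx_cond (eq_sym t).
by case: (j == l); case: (l == t);
  rewrite ?mulr0n ?mulr1n ?mul0mx ?mul_delta_mx_cond ?mulrb ?(eq_sym k i).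
Qed.

Lemma Phi_add (A B : 'M[F]_(p, q)) : Phi (A + B) = fa_add (Phi A) (Phi B).
Proof.
by apply: functional_extensionality => -[|a [|b w]]; rewrite /fa_add /= ?mxE ?addr0.
Qed.

Lemma Phi_if (b : bool) (A : 'M[F]_(p, q)) :
  Phi (if b then A else 0) = if b then Phi A else @fa_zero F p q.
Proof.
case: b => //; apply: functional_extensionality => -[|a [|c w]] //=.
by rewrite mxE.
Qed.

Lemma Psi_zero : Psi (@fa_zero F p q) = 0.
Proof. by rewrite -coef_nil Psi_coef big_nil. Qed.

Lemma Phi_delta i j : Phi (delta_mx i j) = coef_word F [:: (i, j)] :> fa.
Proof.
apply: functional_extensionality => w; rewrite coef_wordE /Phi.
case: w => [|[a b] [|c w]] //=; last by rewrite eqseq_cons andbF.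
by rewrite mxE eqseq_cons andbT xpair_eqE.
Qed.

Lemma Psi_G i j : Psi (@G F p q i j) = jmx F i j.
Proof. by rewrite /G Phi_delta Psi_coef !big_seq1 scale1r /wmx big_seq1. Qed.

Lemma Psi_opp (f : fa) : is_fa f -> Psi (fa_opp f) = - Psi f.
Proof. by move=> hf; rewrite Psi_scale // scaleN1r. Qed.

Lemma Psi_rel_gen i j k l s t : Psi (@rel_gen F p q i j k l s t) = 0.
Proof.
rewrite /rel_gen !(Psi_add, Psi_opp, Psi_mul); try by
  repeat (apply: is_fa_add || apply: is_fa_mul || apply: is_fa_scale || apply: is_fa_Phi).
rewrite jtriple_delta Phi_add Psi_add; try exact: is_fa_Phi.
rewrite !Phi_if !(fun_if (@Psi F p q)) Psi_zero !Psi_G !mulmxE.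
by rewrite triple_rel_jmx subrr.
Qed.

Lemma is_fa_coef (l : seq (F * word p q)) :
  all (fun a => a.2 != [::]) l -> is_fa (coef l).
Proof.
move=> /allP l0; split; last by exists (comb_bound l); exact: bounded_coef.
by rewrite /coef big_seq big1 // => a /l0; rewrite eq_sym => /negbTE ->; rewrite mulr0.
Qed.

Lemma Psi_surj (i0 i1 : 'I_p) (j0 j1 : 'I_q) : i0 != i1 -> j0 != j1 ->
  forall A : 'M[F]_(p + q), exists2 f, is_fa f & Psi f = A.
Proof.
move=> hi hj A.
pose l := [seq (A a b, unit_word i0 i1 j0 j1 a b) | a <- index_enum 'I_(p + q),
                                                    b <- index_enum 'I_(p + q)].
exists (coef l).
  by apply: is_fa_coef; apply/allP => _ /allpairsP[[a b] [_ _ ->]]; exact: unit_word_neq0.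
rewrite Psi_coef big_allpairs_dep [RHS]matrix_sum_delta; apply: eq_bigr => a _.
by apply: eq_bigr => b _; rewrite /= wmx_unit_word.
Qed.

End PsiRelations.

Lemma twice_inj_lmod (F : fieldType) (V : lmodType F) :
  2%:R != 0 :> F -> forall a b : V, a *+ 2 = b *+ 2 -> a = b.
Proof.
move=> two0 a b e.
by rewrite -[a]scale1r -[b]scale1r -(mulVf two0) -!scalerA !scaler_nat e.
Qed.

Section Kernel.
Variables (F : fieldType) (p q : nat).
Hypothesis two0 : 2%:R != 0 :> F.
Variables (i0 i1 : 'I_p) (j0 j1 : 'I_q).
Hypotheses (hi : i0 != i1) (hj : j0 != j1).
Local Notation fa := (fa F p q).
Local Notation word := (word p q).
Local Notation comb := (seq (F * word)).
Local Notation env := (env F p q).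
Local Notation M := 'M[F]_(p + q).

Definition xq (s : 'I_p) (t : 'I_q) : env := pi [:: (1, [:: (s, t)])].

Lemma triple_rel_xq : triple_rel xq.
Proof.
move=> i j k l s t.
have pi_if b (l0 : comb) : (if b then pi l0 else 0) = pi (if b then l0 else [::]).
  by case: b.
rewrite /xq !piM !piD !pi_if piD; apply: pi_eq.
have := @envI_rel_gen F p q i j k l s t; rewrite /congI; congr envI.
rewrite /rel_gen /G jtriple_delta Phi_add !Phi_if !Phi_delta /coef_word.
by rewrite !coef_mul -coef_nil -!(fun_if (@coef F p q)) -!coef_cat.
Qed.

Local Notation twice_inj := (@twice_inj_lmod F env two0).
Local Notation eunit := (munit xq i0 i1 j0 j1).

(* The inverse of [Psi], through the matrix units of the envelope. *)
Definition sigma (A : M) : env := \sum_a \sum_b A a b *: eunit a b.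

Fact sigma_is_linear : linear sigma.
Proof.
move=> c A B; rewrite /sigma scaler_sumr -big_split; apply: eq_bigr => a _.
rewrite scaler_sumr -big_split; apply: eq_bigr => b _.
by rewrite !mxE scalerDl scalerA.
Qed.

HB.instance Definition _ := GRing.isLinear.Build F M env _ sigma sigma_is_linear.

Lemma sigma_delta a b : sigma (delta_mx a b) = eunit a b.
Proof.
rewrite /sigma (bigD1 a) //= (bigD1 b) //= !mxE !eqxx scale1r.
rewrite big1 ?addr0 => [|b' /negbTE nb]; last by rewrite mxE nb andbF scale0r.
rewrite big1 ?addr0 // => a' /negbTE na; rewrite big1 // => b' _.
by rewrite mxE na scale0r.
Qed.

Lemma sigma_mul_xq A s t : sigma A * xq s t = sigma (A *m jmx F s t).
Proof.
rewrite [in RHS](matrix_sum_delta A) {1}/sigma mulmx_suml linear_sum mulr_suml.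
apply: eq_bigr => a _; rewrite mulmx_suml linear_sum mulr_suml.
apply: eq_bigr => b _; rewrite -scalemxAl linearZ -env_scalerAl; congr (_ *: _).
rewrite delta_mul_jmx linearD /= !(fun_if sigma) linear0 !sigma_delta.
by rewrite (munit_mul_x triple_rel_xq twice_inj hi hj).
Qed.

Lemma sigma_jmx s t : sigma (jmx F s t) = xq s t.
Proof.
by rewrite linearD /= !sigma_delta -(x_munitE triple_rel_xq twice_inj hi hj).
Qed.

Lemma pi_word (w : word) : pi [:: (1, w)] = \prod_(a <- w) xq a.1 a.2.
Proof.
elim: w => [|[s t] w IH]; first by rewrite big_nil.
by rewrite big_cons -IH /xq piM /cmul /= mulr1.
Qed.

Lemma pi_word_sigma (w : word) : w != [::] -> pi [:: (1, w)] = sigma (wmx F w).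
Proof.
case: w => [//|[s t] w] _; rewrite pi_word big_cons -sigma_jmx.
elim/last_ind: w => [|w a IH]; first by rewrite big_nil mulr1 /wmx big_seq1.
by rewrite -rcons_cons !big_rcons mulrA IH sigma_mul_xq /wmx big_rcons mulmxE.
Qed.

Lemma Psi_eq0_envI (f : fa) : is_fa f -> Psi f = 0 -> envI f.
Proof.
move=> hf Psif0; have [n bf] := is_fa_bounded hf.
have pi_f : pi (comb_of f n) = sigma (Psi f).
  rewrite (PsiE bf) linear_sum /comb_of.
  elim: (words p q n) => [|w ws IH]; first by rewrite big_nil.
  rewrite big_cons -IH /= -cat1s -piD linearZ /=; congr (_ + _).
  have -> : pi [:: (f w, w)] = f w *: pi [:: (1, w)] by rewrite piZ /cscale /= mulr1.
  have [->|nw] := eqVneq w [::]; first by case: hf => -> _; rewrite !scale0r.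
  by rewrite pi_word_sigma.
rewrite Psif0 linear0 -pi_nil in pi_f.
have := pi_inj pi_f; rewrite /congI (coef_comb_of bf) coef_nil; congr envI.
by apply: functional_extensionality => w; rewrite /fa_add /fa_opp /fa_scale mulr0 addr0.
Qed.

End Kernel.

Section Envelope.
Variables (F : fieldType) (p q : nat).
Local Notation fa := (fa F p q).

Lemma is_ideal_kernel_Psi : is_ideal (fun f : fa => is_fa f /\ Psi f = 0).
Proof.
split.
- by move=> f [].
- by split; [exact: is_fa_zero|exact: Psi_zero].
- move=> f g [hf Pf] [hg Pg]; split; first exact: is_fa_add.
  by rewrite Psi_add // Pf Pg addr0.
- move=> c f [hf Pf]; split; first exact: is_fa_scale.
  by rewrite Psi_scale // Pf scaler0.
- move=> a f ha [hf Pf]; split; (split; first exact: is_fa_mul);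
    by rewrite Psi_mul // Pf ?mulmx0 ?mul0mx.
Qed.

Lemma envI_Psi_eq0 (f : fa) : envI f -> Psi f = 0.
Proof.
move=> If; have [] := If _ is_ideal_kernel_Psi => //.
by move=> i j k l s t; split; [exact: is_fa_rel_gen|exact: Psi_rel_gen].
Qed.

Lemma Psi_eq_envI (i0 i1 : 'I_p) (j0 j1 : 'I_q) :
  2%:R != 0 :> F -> i0 != i1 -> j0 != j1 -> forall f g : fa, is_fa f -> is_fa g ->
  (Psi f = Psi g <-> envI (fa_add f (fa_opp g))).
Proof.
move=> two0 hi hj f g hf hg.
have hfg : is_fa (fa_add f (fa_opp g)) by apply: is_fa_add => //; exact: is_fa_scale.
have Psi_fg : Psi (fa_add f (fa_opp g)) = Psi f - Psi g.
  by rewrite Psi_add ?Psi_opp //; exact: is_fa_scale.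
split=> [Pfg|/envI_Psi_eq0]; last by rewrite Psi_fg => /eqP; rewrite subr_eq0 => /eqP.
by apply: (Psi_eq0_envI two0 hi hj) => //; rewrite Psi_fg Pfg subrr.
Qed.

End Envelope.

Theorem theorem3p1 (F : fieldType) (p q : nat) :
  [pchar F] =i pred0 -> (1 < p)%N -> (1 < q)%N -> p != q ->
  exists Psi : fa F p q -> 'M[F]_(p + q),
    [/\ forall f g, is_fa f -> is_fa g -> Psi (fa_add f g) = Psi f + Psi g,
        forall (c : F) f, is_fa f -> Psi (fa_scale c f) = c *: Psi f,
        forall f g, is_fa f -> is_fa g -> Psi (fa_mul f g) = Psi f *m Psi g,
        forall M : 'M[F]_(p + q), exists2 f, is_fa f & Psi f = M &
        forall f g, is_fa f -> is_fa g ->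
          (Psi f = Psi g <-> envI (fa_add f (fa_opp g)))].
Proof.
move=> charF0 p2 q2 _.
pose i0 : 'I_p := Ordinal (ltnW p2); pose i1 : 'I_p := Ordinal p2.
pose j0 : 'I_q := Ordinal (ltnW q2); pose j1 : 'I_q := Ordinal q2.
have hi : i0 != i1 by [].
have hj : j0 != j1 by [].
have two0 : 2%:R != 0 :> F by rewrite ((pcharf0P F).1 charF0 2).
exists (@Psi F p q); split.
- exact: Psi_add.
- exact: Psi_scale.
- exact: Psi_mul.
- exact: Psi_surj hi hj.
- exact: Psi_eq_envI two0 hi hj.
Qed.
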